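(* Let $\triangle ABC$ be a nondegenerate triangle with circumradius $R$, circumscribed about a central conic with linear eccentricity $c$ (half the distance between the foci). (a) If the circumcenter of $\triangle ABC$ coincides with the center of the conic, then $3R^2>c^2$. (b) If the circumcenter of $\triangle ABC$ coincides with a focus of the conic, then $3R>2c$.
   Context: A central conic is a non-degenerate ellipse or hyperbola. A triangle is circumscribed about a conic if each of its three sidelines is tangent to the conic. *)

From HB Require Import structures.
From mathcomp Require Import all_boot all_order all_algebra.
From mathcomp Require Import reals.
Set Implicit Arguments. Unset Strict Implicit. Unset Printing Implicit Defensive.
Import Order.TTheory GRing.Theory Num.Theory.
Local Open Scope ring_scope.

Section Plane.
Variable R : realType.
Definition point := (R * R)%type.

Definition psub (p q : point) : point := (p.1 - q.1, p.2 - q.2).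
Definition padd (p q : point) : point := (p.1 + q.1, p.2 + q.2).
Definition pscale (k : R) (p : point) : point := (k * p.1, k * p.2).
Definition dot (p q : point) : R := p.1 * q.1 + p.2 * q.2.
Definition norm2 (p : point) : R := dot p p.
Definition perp (p : point) : point := (- p.2, p.1).
Definition dist (p q : point) : R := Num.sqrt (norm2 (psub p q)).

Definition nondegenerate_triangle (A B C : point) : Prop :=
  let u := psub B A in let v := psub C A in u.1 * v.2 - u.2 * v.1 != 0.

Definition is_circumcenter (O A B C : point) : Prop :=
  dist O A = dist O B /\ dist O B = dist O C.

(* A central conic, given in its own orthonormal frame:
   centre [ctr], unit axis direction [ax] (second axis = perp ax),
   semi-axes [sa], [sb] > 0; [hyp = false]: ellipse x^2/a^2 + y^2/b^2 = 1,
   [hyp = true]: hyperbola x^2/a^2 - y^2/b^2 = 1, where x, y are the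
   coordinates of X - ctr along ax and perp ax. *)
Record central_conic := CentralConic {
  ctr : point; ax : point; sa : R; sb : R; hyp : bool }.

Definition wf_conic (K : central_conic) : Prop :=
  norm2 (ax K) = 1 /\ 0 < sa K /\ 0 < sb K.

Definition sgn (K : central_conic) : R := if hyp K then -1 else 1.

Definition xc (K : central_conic) (X : point) : R := dot (psub X (ctr K)) (ax K).
Definition yc (K : central_conic) (X : point) : R := dot (psub X (ctr K)) (perp (ax K)).

Definition on_conic (K : central_conic) (X : point) : Prop :=
  (xc K X) ^+ 2 / (sa K) ^+ 2 + sgn K * (yc K X) ^+ 2 / (sb K) ^+ 2 = 1.

(* The line through P and Q (P <> Q) is tangent to K: restricting the conic
   equation to the line P + t (Q - P) gives a genuine quadratic in t
   (leading coefficient nonzero) with a double root. *)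
Definition tangent_line (K : central_conic) (P Q : point) : Prop :=
  let d := psub Q P in
  let dx := dot d (ax K) in let dy := dot d (perp (ax K)) in
  let px := xc K P in let py := yc K P in
  let a2 := (sa K) ^+ 2 in let b2 := (sb K) ^+ 2 in
  let al := dx ^+ 2 / a2 + sgn K * dy ^+ 2 / b2 in
  let be := 2 * (px * dx / a2 + sgn K * py * dy / b2) in
  let ga := px ^+ 2 / a2 + sgn K * py ^+ 2 / b2 - 1 in
  al != 0 /\ be ^+ 2 = 4 * al * ga.

Definition lin_ecc (K : central_conic) : R :=
  if hyp K then Num.sqrt ((sa K) ^+ 2 + (sb K) ^+ 2)
  else Num.sqrt `|(sa K) ^+ 2 - (sb K) ^+ 2|.

(* the foci: ctr +- c * (direction of the focal (major / transverse) axis) *)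
Definition focal_dir (K : central_conic) : point :=
  if hyp K || (sb K <= sa K) then ax K else perp (ax K).

Definition is_focus (K : central_conic) (F : point) : Prop :=
  F = padd (ctr K) (pscale (lin_ecc K) (focal_dir K)) \/
  F = padd (ctr K) (pscale (- lin_ecc K) (focal_dir K)).

Definition circumscribed (K : central_conic) (A B C : point) : Prop :=
  tangent_line K B C /\ tangent_line K C A /\ tangent_line K A B.

End Plane.

From HB Require Import structures.
From mathcomp Require Import all_boot all_order all_algebra.
From mathcomp Require Import reals ring lra.
Import Order.TTheory GRing.Theory Num.Theory.
Set Implicit Arguments. Unset Strict Implicit. Unset Printing Implicit Defensive.
Local Open Scope ring_scope.

(* In a frame along the focal axis a central conic reads x^2 / al + y^2 / be = 1 with
   be <= al (be < 0 for a hyperbola) and c^2 = al - be.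
   (a) If the vertices lie on a circle of squared radius r about the centre, the three
   tangency conditions force r^2 - 2 r (al + be) + (al - be)^2 = 0, i.e. R = a +- b. This has
   no root for a hyperbola; for an ellipse the vertices lie outside it, so r >= be, which
   leaves al - be < 3 r.
   (b) If the circumcentre O is a focus, the midpoints of the sides are the feet of the
   perpendiculars from O to the tangent sidelines, so they lie on the auxiliary circle: the
   centre N of the conic is the nine-point centre. Euler's relation
   |OH|^2 = 9 R^2 - (a^2 + b^2 + c^2) with |OH| = 2 |ON| = 2 c gives 4 c^2 < 9 R^2. *)

Section TangentChords.
Variable R : realType.
Implicit Types (al be k m r f : R) (o p q s : point R).

Definition cross p q : R := p.1 * q.2 - p.2 * q.1.

(* The line through [p] and [q] misses the origin and its line coordinates [(u, v)]
   ([u x + v y = 1] on the line) satisfy [al u^2 + be v^2 = 1], i.e. it is tangent to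
   [x^2 / al + y^2 / be = 1]. *)
Definition tangent_chord al be p q : Prop :=
  cross p q != 0 /\ be * (p.1 - q.1) ^+ 2 + al * (p.2 - q.2) ^+ 2 = cross p q ^+ 2.

Lemma tangent_chord_of_double_root a2 b2 sg p q :
  a2 != 0 -> b2 != 0 -> sg ^+ 2 = 1 ->
  (q.1 - p.1) ^+ 2 / a2 + sg * (q.2 - p.2) ^+ 2 / b2 != 0 ->
  (2 * (p.1 * (q.1 - p.1) / a2 + sg * p.2 * (q.2 - p.2) / b2)) ^+ 2 =
    4 * ((q.1 - p.1) ^+ 2 / a2 + sg * (q.2 - p.2) ^+ 2 / b2)
      * (p.1 ^+ 2 / a2 + sg * p.2 ^+ 2 / b2 - 1) ->
  tangent_chord a2 (sg * b2) p q.
Proof.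
move=> a0 b0 s2 lead disc.
pose T := b2 * (q.1 - p.1) ^+ 2 + sg * a2 * (q.2 - p.2) ^+ 2 - sg * cross p q ^+ 2.
have T0 : T = 0.
  apply: (mulfI (_ : 4 != 0)); first by rewrite pnatr_eq0.
  have -> : 4 * T = ((2 * (p.1 * (q.1 - p.1) / a2 + sg * p.2 * (q.2 - p.2) / b2)) ^+ 2
      - 4 * ((q.1 - p.1) ^+ 2 / a2 + sg * (q.2 - p.2) ^+ 2 / b2)
        * (p.1 ^+ 2 / a2 + sg * p.2 ^+ 2 / b2 - 1)) * (a2 * b2).
    by rewrite /T /cross; field; rewrite a0 b0.
  by rewrite disc subrr mul0r mulr0.
split.
  apply: contraNneq lead => c0.
  have -> : (q.1 - p.1) ^+ 2 / a2 + sg * (q.2 - p.2) ^+ 2 / b2 =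
      (T + sg * cross p q ^+ 2) / (a2 * b2).
    by rewrite /T; field; rewrite a0 b0.
  by rewrite T0 c0 expr0n /= mulr0 addr0 mul0r.
have -> : sg * b2 * (p.1 - q.1) ^+ 2 + a2 * (p.2 - q.2) ^+ 2 =
    sg * T + sg ^+ 2 * cross p q ^+ 2 + (1 - sg ^+ 2) * a2 * (p.2 - q.2) ^+ 2.
  by rewrite /T; ring.
by rewrite T0 s2 subrr mulr0 mul1r !mul0r add0r addr0.
Qed.

Lemma tangent_chord_rot al be p q :
  tangent_chord al be p q -> tangent_chord be al (p.2, - p.1) (q.2, - q.1).
Proof.
rewrite /tangent_chord /cross /=.
have -> : p.2 * - q.1 - - p.1 * q.2 = p.1 * q.2 - p.2 * q.1 by ring.
by move=> [-> <-]; split=> //; ring.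
Qed.

Lemma tangent_chord_outside al be p q :
  tangent_chord al be p q -> al * be <= be * p.1 ^+ 2 + al * p.2 ^+ 2.
Proof.
move=> [c0 hT]; have c2 : 0 < cross p q ^+ 2 by rewrite exprn_even_gt0 //= c0.
rewrite -subr_ge0 -(pmulr_lge0 _ c2).
have -> : (be * p.1 ^+ 2 + al * p.2 ^+ 2 - al * be) * cross p q ^+ 2 =
    (be * p.1 * (p.1 - q.1) + al * p.2 * (p.2 - q.2)) ^+ 2 + (be * p.1 ^+ 2 + al * p.2 ^+ 2)
      * (cross p q ^+ 2 - (be * (p.1 - q.1) ^+ 2 + al * (p.2 - q.2) ^+ 2)).
  by rewrite /cross; ring.
by rewrite hT subrr mulr0 addr0 sqr_ge0.
Qed.

Lemma norm2_ge0 p : 0 <= norm2 p.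
Proof. by rewrite /norm2 /dot -!expr2 addr_ge0 ?sqr_ge0. Qed.

Lemma norm2_psub_gt0 p q : p != q -> 0 < norm2 (psub p q).
Proof.
case: p q => [a b] [c d]; rewrite xpair_eqE negb_and /norm2 /dot /psub /= -!expr2 => ne.
by rewrite lt_def addr_ge0 ?sqr_ge0 // andbT paddr_eq0 ?sqr_ge0 // !sqrf_eq0 !subr_eq0 negb_and.
Qed.

Lemma cross_neq0_neq p q : cross p q != 0 -> p != q.
Proof. by apply: contraNneq => ->; rewrite /cross mulrC subrr. Qed.

Lemma norm2_mul_cross_dot p q : norm2 p * norm2 q = cross p q ^+ 2 + dot p q ^+ 2.
Proof. by rewrite /norm2 /cross /dot; ring. Qed.

Lemma tangent_chord_on_circle al be r p q :
  norm2 p = r -> norm2 q = r -> tangent_chord al be p q ->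
  (r - (al - be)) * p.1 * q.1 + (r + (al - be)) * p.2 * q.2 = r * (al + be - r).
Proof.
move=> hp hq [c0 hT].
have gap : 2 * (r - dot p q) != 0.
  have -> : 2 * (r - dot p q) = norm2 (psub p q) + (r - norm2 p) + (r - norm2 q).
    by rewrite /norm2 /dot /psub /=; ring.
  by rewrite hp hq !subrr !addr0 gt_eqF // norm2_psub_gt0 // cross_neq0_neq.
have : 2 * (r - dot p q) *
    ((r - (al - be)) * p.1 * q.1 + (r + (al - be)) * p.2 * q.2 - r * (al + be - r)) = 0.
  have -> : 2 * (r - dot p q) *
      ((r - (al - be)) * p.1 * q.1 + (r + (al - be)) * p.2 * q.2 - r * (al + be - r)) =
    2 * r * (cross p q ^+ 2 - (be * (p.1 - q.1) ^+ 2 + al * (p.2 - q.2) ^+ 2))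
    + (norm2 p - r) * (r * (al + be) - 2 * r * norm2 q + (al - be) * (q.1 ^+ 2 - q.2 ^+ 2))
    + (norm2 q - r) * (r * (al + be) - 2 * r ^+ 2 + (al - be) * (p.1 ^+ 2 - p.2 ^+ 2)).
    by rewrite /norm2 /dot /cross; ring.
  by rewrite hT hp hq !subrr; ring.
by move/eqP; rewrite mulf_eq0 (negbTE gap) subr_eq0 => /eqP.
Qed.

Lemma circle_bilinear_triple m1 m2 k r p1 p2 p3 :
  nondegenerate_triangle p1 p2 p3 ->
  norm2 p1 = r -> norm2 p2 = r -> norm2 p3 = r ->
  m1 * p2.1 * p3.1 + m2 * p2.2 * p3.2 = k ->
  m1 * p3.1 * p1.1 + m2 * p3.2 * p1.2 = k ->
  m1 * p1.1 * p2.1 + m2 * p1.2 * p2.2 = k ->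
  k * (m1 + m2) + r * m1 * m2 = 0.
Proof.
rewrite /nondegenerate_triangle /=; set D := (X in X != 0) => nD h1 h2 h3 b23 b31 b12.
pose b x y := m1 * x.1 * y.1 + m2 * x.2 * y.2 - k.
have /eqP : D ^+ 2 * (k * (m1 + m2) + r * m1 * m2) = 0.
  have -> : D ^+ 2 * (k * (m1 + m2) + r * m1 * m2) =
    - ((b p2 p2 * b p3 p3 - b p2 p3 ^+ 2) * (norm2 p1 - r)
     + (b p1 p1 * b p3 p3 - b p3 p1 ^+ 2) * (norm2 p2 - r)
     + (b p1 p1 * b p2 p2 - b p1 p2 ^+ 2) * (norm2 p3 - r)
     + 2 * ((b p3 p1 * b p2 p3 - b p1 p2 * b p3 p3) * (dot p1 p2 - r)
          + (b p1 p2 * b p2 p3 - b p3 p1 * b p2 p2) * (dot p3 p1 - r)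
          + (b p1 p2 * b p3 p1 - b p1 p1 * b p2 p3) * (dot p2 p3 - r))).
    by rewrite /D /b /norm2 /dot; ring.
  by rewrite /b b23 b31 b12 h1 h2 h3 !subrr; ring.
by rewrite mulf_eq0 sqrf_eq0 (negbTE nD) => /eqP.
Qed.

Lemma concentric_tangential_quartic al be r p1 p2 p3 :
  nondegenerate_triangle p1 p2 p3 ->
  norm2 p1 = r -> norm2 p2 = r -> norm2 p3 = r ->
  tangent_chord al be p2 p3 -> tangent_chord al be p3 p1 -> tangent_chord al be p1 p2 ->
  r ^+ 2 - 2 * r * (al + be) + (al - be) ^+ 2 = 0.
Proof.
move=> nd h1 h2 h3 t23 t31 t12.
have := circle_bilinear_triple nd h1 h2 h3 (tangent_chord_on_circle h2 h3 t23)
  (tangent_chord_on_circle h3 h1 t31) (tangent_chord_on_circle h1 h2 t12).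
have r0 : r != 0.
  apply: contraNneq t12.1 => r0; have := norm2_mul_cross_dot p1 p2.
  rewrite h1 h2 r0 mul0r => /esym/eqP.
  by rewrite paddr_eq0 ?sqr_ge0 // sqrf_eq0 => /andP[].
have -> : r * (al + be - r) * (r - (al - be) + (r + (al - be)))
    + r * (r - (al - be)) * (r + (al - be)) =
  - r * (r ^+ 2 - 2 * r * (al + be) + (al - be) ^+ 2) by ring.
by move/eqP; rewrite mulf_eq0 oppr_eq0 (negbTE r0) => /eqP.
Qed.

Lemma concentric_ellipse_bound al be r p q :
  0 < be <= al -> norm2 p = r -> norm2 q = r -> cross p q != 0 ->
  al * be <= be * p.1 ^+ 2 + al * p.2 ^+ 2 -> al * be <= be * q.1 ^+ 2 + al * q.2 ^+ 2 ->
  r ^+ 2 - 2 * r * (al + be) + (al - be) ^+ 2 = 0 -> al - be < 3 * r.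
Proof.
move=> /andP[be0 beal]; rewrite /norm2 /dot -!expr2 => hp hq cpq op oq E.
have al0 : 0 < al := lt_le_trans be0 beal.
have ber : be <= r.
  rewrite -(ler_pM2l al0) -hp (le_trans op) // mulrDr lerD2r.
  by rewrite ler_wpM2r ?sqr_ge0.
have r0 : 0 < r := lt_le_trans be0 ber.
have F : (al - be - 3 * r) * (al - be + r) = 4 * r * (be - r).
  by rewrite -[RHS]addr0 -E; ring.
have le3 : al - be <= 3 * r.
  rewrite -subr_le0 -(pmulr_lle0 _ (_ : 0 < al - be + r)) ?F; last by lra.
  by rewrite pmulr_rle0 ?subr_le0 // mulr_gt0.
rewrite lt_neqAle le3 andbT; apply: contraNneq cpq => eq3.
have be_r : be = r.
  move: F; rewrite eq3 subrr mul0r => /esym/eqP.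
  by rewrite mulf_eq0 mulf_eq0 pnatr_eq0 (gt_eqF r0) subr_eq0 => /eqP.
have al_r : al = 4 * r by lra.
(* in the equality case the circle lies inside the ellipse, touching it at the minor vertices *)
have x0 (x y : R) : x ^+ 2 + y ^+ 2 = r -> al * be <= be * x ^+ 2 + al * y ^+ 2 -> x = 0.
  move=> hxy oxy; apply/eqP; rewrite -sqrf_eq0 eq_le sqr_ge0 andbT.
  rewrite -(pmulr_rle0 _ r0); move: oxy; rewrite al_r be_r -hxy; nra.
by rewrite /cross (x0 _ _ hp op) (x0 _ _ hq oq) !mul0r mulr0 subrr.
Qed.

Lemma concentric_tangential_bound al be r p1 p2 p3 :
  0 < al -> be <= al -> nondegenerate_triangle p1 p2 p3 ->
  norm2 p1 = r -> norm2 p2 = r -> norm2 p3 = r ->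
  tangent_chord al be p2 p3 -> tangent_chord al be p3 p1 -> tangent_chord al be p1 p2 ->
  al - be < 3 * r.
Proof.
move=> al0 beal nd h1 h2 h3 t23 t31 t12.
have E := concentric_tangential_quartic nd h1 h2 h3 t23 t31 t12.
have [be0|be_le0] := ltrP 0 be.
  apply: (concentric_ellipse_bound _ h2 h3 t23.1) E; rewrite ?be0 //.
    exact: tangent_chord_outside t23.
  exact: tangent_chord_outside t31.
(* the quartic is [(r - al - be)^2 - 4 al be], so [be < 0] (a hyperbola) is impossible *)
have /andP[/eqP r_eq] : ((r - (al + be)) ^+ 2 == 0) && (4 * al * - be == 0).
  rewrite -paddr_eq0 ?sqr_ge0 ?mulr_ge0 ?oppr_ge0 ?ler0n ?(ltW al0) //.
  by rewrite -E; apply/eqP; ring.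
rewrite !mulf_eq0 pnatr_eq0 (gt_eqF al0) oppr_eq0 /= => /eqP be0.
move/eqP: r_eq; rewrite sqrf_eq0 be0 addr0 subr_eq0 => /eqP ->.
by rewrite subr0 ltr_pMl // ltr1n.
Qed.

(* The foot of the perpendicular from a focus to a tangent lies on the auxiliary circle;
   when the focus is the centre of a circle through [p] and [q], that foot is the midpoint. *)
Lemma focal_chord_midpoint al be f r p q :
  f ^+ 2 = al - be -> norm2 (psub (f, 0) p) = r -> norm2 (psub (f, 0) q) = r ->
  tangent_chord al be p q -> norm2 (padd p q) = 4 * al.
Proof.
move=> hf hp hq [c0 hT].
have pq := norm2_psub_gt0 (cross_neq0_neq c0).
have : (norm2 (padd p q) - 4 * al) * norm2 (psub p q) = 0.
  have -> : (norm2 (padd p q) - 4 * al) * norm2 (psub p q) =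
    4 * (cross p q ^+ 2 - (be * (p.1 - q.1) ^+ 2 + al * (p.2 - q.2) ^+ 2))
    + 4 * (q.1 - p.1) ^+ 2 * (f ^+ 2 - (al - be))
    + (norm2 (psub (f, 0) q) - norm2 (psub (f, 0) p))
      * ((p.1 + q.1) * (q.1 - p.1) + (p.2 + q.2) * (q.2 - p.2) + 2 * f * (q.1 - p.1)).
    by rewrite /norm2 /dot /psub /padd /cross /=; ring.
  by rewrite hT hf hp hq !subrr; ring.
by move/eqP; rewrite mulf_eq0 (gt_eqF pq) orbF subr_eq0 => /eqP.
Qed.

Lemma nondegenerate_dot_eq0 p1 p2 p3 s :
  nondegenerate_triangle p1 p2 p3 ->
  dot s (psub p2 p1) = 0 -> dot s (psub p3 p1) = 0 -> s = (0, 0).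
Proof.
rewrite /nondegenerate_triangle /=; set D := (X in X != 0) => nD.
case: s => a b su sv; congr (_, _); apply: (mulIf nD); rewrite mul0r.
  have -> : a * D =
      (psub p3 p1).2 * dot (a, b) (psub p2 p1) - (psub p2 p1).2 * dot (a, b) (psub p3 p1).
    by rewrite /D /dot /psub /=; ring.
  by rewrite su sv !mulr0 subrr.
have -> : b * D =
    (psub p2 p1).1 * dot (a, b) (psub p3 p1) - (psub p3 p1).1 * dot (a, b) (psub p2 p1).
  by rewrite /D /dot /psub /=; ring.
by rewrite su sv !mulr0 subrr.
Qed.

(* The proof
   shows [p1 + p2 + p3 = o + 2 n], so the orthocentre is [2 n - o], and the bound is Euler's
   [|OH|^2 = 9 R^2 - (a^2 + b^2 + c^2)] with [|OH| = 2 |ON|]. *)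
Lemma nine_point_bound o n r m p1 p2 p3 :
  nondegenerate_triangle p1 p2 p3 ->
  norm2 (psub o p1) = r -> norm2 (psub o p2) = r -> norm2 (psub o p3) = r ->
  norm2 (psub (padd p2 p3) (pscale 2 n)) = m ->
  norm2 (psub (padd p3 p1) (pscale 2 n)) = m ->
  norm2 (psub (padd p1 p2) (pscale 2 n)) = m ->
  4 * norm2 (psub o n) < 9 * r.
Proof.
move=> nd h1 h2 h3 m23 m31 m12.
have two : (2 : R) != 0 by rewrite pnatr_eq0.
pose s : point R :=
  (p1.1 + p2.1 + p3.1 - o.1 - 2 * n.1, p1.2 + p2.2 + p3.2 - o.2 - 2 * n.2).
have s0 : s = (0, 0).
  apply: (nondegenerate_dot_eq0 nd); apply: (mulfI two); rewrite mulr0.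
    have -> : 2 * dot s (psub p2 p1) =
      norm2 (psub (padd p2 p3) (pscale 2 n)) - norm2 (psub (padd p3 p1) (pscale 2 n))
      + (norm2 (psub o p2) - norm2 (psub o p1)).
      by rewrite /s /norm2 /dot /psub /padd /pscale /=; ring.
    by rewrite m23 m31 h1 h2 !subrr addr0.
  have -> : 2 * dot s (psub p3 p1) =
    norm2 (psub (padd p2 p3) (pscale 2 n)) - norm2 (psub (padd p1 p2) (pscale 2 n))
    + (norm2 (psub o p3) - norm2 (psub o p1)).
    by rewrite /s /norm2 /dot /psub /padd /pscale /=; ring.
  by rewrite m23 m12 h1 h3 !subrr addr0.
(* Leibniz: [3 sum |o - p_i|^2 = |p1 + p2 + p3 - 3 o|^2 + sum of the squared sides] *)
have E : 3 * (norm2 (psub o p1) + norm2 (psub o p2) + norm2 (psub o p3)) =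
    4 * norm2 (psub o n) + (norm2 (psub p2 p1) + norm2 (psub p3 p2) + norm2 (psub p1 p3))
    + dot s (padd s (pscale 4 (psub n o))).
  by rewrite /s /norm2 /dot /psub /padd /pscale /=; ring.
rewrite s0 h1 h2 h3 /dot /= !mul0r addr0 in E.
have p21 : p2 != p1.
  by apply: contraNneq nd => ->; rewrite /nondegenerate_triangle /= !subrr !mul0r subrr.
have := norm2_psub_gt0 p21; have := norm2_ge0 (psub p3 p2); have := norm2_ge0 (psub p1 p3).
lra.
Qed.

Lemma focal_tangential_bound al be f r p1 p2 p3 :
  f ^+ 2 = al - be -> nondegenerate_triangle p1 p2 p3 ->
  norm2 (psub (f, 0) p1) = r -> norm2 (psub (f, 0) p2) = r -> norm2 (psub (f, 0) p3) = r ->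
  tangent_chord al be p2 p3 -> tangent_chord al be p3 p1 -> tangent_chord al be p1 p2 ->
  4 * f ^+ 2 < 9 * r.
Proof.
move=> hf nd h1 h2 h3 t23 t31 t12.
have mid p q : norm2 (psub (f, 0) p) = r -> norm2 (psub (f, 0) q) = r ->
    tangent_chord al be p q -> norm2 (psub (padd p q) (pscale 2 (0, 0))) = 4 * al.
  move=> hp hq t; rewrite -(focal_chord_midpoint hf hp hq t).
  by rewrite /norm2 /dot /psub /pscale /= mulr0 !subr0.
have := nine_point_bound nd h1 h2 h3 (mid _ _ h2 h3 t23) (mid _ _ h3 h1 t31) (mid _ _ h1 h2 t12).
by rewrite /norm2 /dot /psub /= !subr0 mulr0 addr0 -expr2.
Qed.

End TangentChords.

Section Frames.
Variable R : realType.
Implicit Types (e o p X Y : point R) (t : R).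

Definition frame e o X : point R := (dot (psub X o) e, dot (psub X o) (perp e)).

Lemma frame_origin e o : frame e o o = (0, 0).
Proof. by rewrite /frame /dot /psub /= !subrr !mul0r addr0. Qed.

Lemma frame_axis e o t : norm2 e = 1 -> frame e o (padd o (pscale t e)) = (t, 0).
Proof.
move=> he; congr (_, _); last by rewrite /dot /psub /padd /pscale /perp /=; ring.
by rewrite -[RHS]mulr1 -he /norm2 /dot /psub /padd /pscale /=; ring.
Qed.

Lemma frame_perp e o X : frame (perp e) o X = ((frame e o X).2, - (frame e o X).1).
Proof. by rewrite /frame /dot /perp /=; congr (_, _); ring. Qed.

Lemma norm2_perp p : norm2 (perp p) = norm2 p.
Proof. by rewrite /norm2 /dot /perp /=; ring. Qed.

Lemma frame_dist e o X Y :
  norm2 e = 1 -> norm2 (psub (frame e o X) (frame e o Y)) = dist X Y ^+ 2.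
Proof.
move=> he; rewrite /dist sqr_sqrtr ?norm2_ge0 //.
transitivity (norm2 (psub X Y) * norm2 e); last by rewrite he mulr1.
by rewrite /frame /norm2 /dot /psub /perp /=; ring.
Qed.

Lemma frame_norm2 e o X : norm2 e = 1 -> norm2 (frame e o X) = dist o X ^+ 2.
Proof.
move=> he; rewrite -(frame_dist o o X he) frame_origin.
by rewrite /norm2 /dot /psub /=; ring.
Qed.

Lemma frame_nondegenerate e o A B C :
  norm2 e = 1 -> nondegenerate_triangle A B C ->
  nondegenerate_triangle (frame e o A) (frame e o B) (frame e o C).
Proof.
rewrite /nondegenerate_triangle /= => he.
set D := (X in X != 0 -> _); set D' := (X in _ -> X != 0).
have -> : D' = D * norm2 e by rewrite /D /D' /frame /norm2 /dot /psub /perp /=; ring.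
by rewrite he mulr1.
Qed.

End Frames.

Section Conics.
Variable R : realType.
Implicit Types (K : central_conic R) (A B C F P Q : point R).

Definition focal_frame K : point R -> point R := frame (focal_dir K) (ctr K).

(* squared semi-axes along and across the focal axis; the second is negative for a hyperbola *)
Definition focal_axis2 K : R := if hyp K || (sb K <= sa K) then sa K ^+ 2 else sb K ^+ 2.
Definition conj_axis2 K : R :=
  if hyp K || (sb K <= sa K) then sgn K * sb K ^+ 2 else sa K ^+ 2.

Lemma norm2_focal_dir K : wf_conic K -> norm2 (focal_dir K) = 1.
Proof. by case=> e1 _; rewrite /focal_dir; case: ifP; rewrite ?norm2_perp. Qed.

Lemma focal_axis2_gt0 K : wf_conic K -> 0 < focal_axis2 K.
Proof. by case=> _ [a0 b0]; rewrite /focal_axis2; case: ifP; rewrite exprn_gt0. Qed.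

Lemma lin_ecc_sq K : wf_conic K -> lin_ecc K ^+ 2 = focal_axis2 K - conj_axis2 K.
Proof.
case=> _ [a0 b0]; rewrite /lin_ecc /focal_axis2 /conj_axis2 /sgn.
case: hyp => /=; first by rewrite sqr_sqrtr ?addr_ge0 ?sqr_ge0 //; ring.
rewrite sqr_sqrtr ?normr_ge0 //; case: ifP => ba.
  by rewrite ger0_norm ?mul1r // subr_ge0; nra.
by rewrite ltr0_norm ?opprB // subr_lt0; move/negbT: ba; rewrite -ltNge; nra.
Qed.

Lemma tangent_line_chord K P Q :
  wf_conic K -> tangent_line K P Q ->
  tangent_chord (sa K ^+ 2) (sgn K * sb K ^+ 2)
    (frame (ax K) (ctr K) P) (frame (ax K) (ctr K) Q).
Proof.
case=> _ [a0 b0]; rewrite /tangent_line => -[lead disc].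
have dx : dot (psub Q P) (ax K) = (frame (ax K) (ctr K) Q).1 - (frame (ax K) (ctr K) P).1.
  by rewrite /frame /dot /psub /=; ring.
have dy : dot (psub Q P) (perp (ax K)) = (frame (ax K) (ctr K) Q).2 - (frame (ax K) (ctr K) P).2.
  by rewrite /frame /dot /psub /=; ring.
rewrite dx dy in lead disc.
apply: tangent_chord_of_double_root lead disc; rewrite ?expf_neq0 ?gt_eqF //.
by rewrite /sgn; case: hyp; rewrite ?sqrrN expr1n.
Qed.

Lemma focal_frame_tangent K P Q :
  wf_conic K -> tangent_line K P Q ->
  tangent_chord (focal_axis2 K) (conj_axis2 K) (focal_frame K P) (focal_frame K Q).
Proof.
move=> wK /(tangent_line_chord wK).
rewrite /focal_frame /focal_axis2 /conj_axis2 /focal_dir; case: ifP => // /norP[/negbTE hK _].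
by rewrite /sgn hK mul1r !frame_perp; exact: tangent_chord_rot.
Qed.

Lemma focal_frame_focus K F :
  wf_conic K -> is_focus K F ->
  exists2 f, focal_frame K F = (f, 0) & f ^+ 2 = lin_ecc K ^+ 2.
Proof.
move=> /norm2_focal_dir e1 [->|->]; [exists (lin_ecc K) | exists (- lin_ecc K)];
  by rewrite ?sqrrN // /focal_frame (frame_axis _ _ e1).
Qed.

End Conics.

Theorem lemma2p1 (R : realType) (K : central_conic R) (A B C : point R) :
  wf_conic K ->
  nondegenerate_triangle A B C ->
  circumscribed K A B C ->
  (is_circumcenter (ctr K) A B C ->
     lin_ecc K ^+ 2 < 3 * dist (ctr K) A ^+ 2) /\
  (forall F : point R, is_focus K F -> is_circumcenter F A B C ->
     2 * lin_ecc K < 3 * dist F A).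
Proof.
move=> wK nd [tBC [tCA tAB]].
have e1 := norm2_focal_dir wK.
have ndF := frame_nondegenerate (ctr K) e1 nd.
have t23 := focal_frame_tangent wK tBC.
have t31 := focal_frame_tangent wK tCA.
have t12 := focal_frame_tangent wK tAB.
split=> [[dAB dBC] | F /(focal_frame_focus wK) [f fF f2] [dAB dBC]].
  rewrite lin_ecc_sq //; apply: (concentric_tangential_bound _ _ ndF) t23 t31 t12.
  - exact: focal_axis2_gt0.
  - by rewrite -subr_ge0 -lin_ecc_sq ?sqr_ge0.
  - exact: frame_norm2.
  - by rewrite dAB; exact: frame_norm2.
  - by rewrite dAB dBC; exact: frame_norm2.
have c0 : 0 <= lin_ecc K by rewrite /lin_ecc; case: hyp; exact: sqrtr_ge0.
have d0 : 0 <= dist F A := sqrtr_ge0 _.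
suff : 4 * lin_ecc K ^+ 2 < 9 * dist F A ^+ 2 by nra.
rewrite -f2; apply: (focal_tangential_bound _ ndF) t23 t31 t12.
- by rewrite -lin_ecc_sq // f2.
- by rewrite -fF; exact: frame_dist.
- by rewrite -fF dAB; exact: frame_dist.
- by rewrite -fF dAB dBC; exact: frame_dist.
Qed.
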